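(* Let $\Delta$, $\mathcal T$ (regular), $\Sigma$, $\mathbf v_0,\ldots,\mathbf v_n$, $K$, $\Phi_\beta$, $\int_{\mathcal A}$ and $C^{ample}_{\mathcal T}$ be as in the context, and let $\mathbf p=p\oplus d\in K\cap\bar M$. Let $\beta=(b_0,\ldots,b_n)\in\mathbb Z^{n+1}$ satisfy $\sum_{i=0}^nb_i\mathbf v_i=-\mathbf p$ and $b_0\le0$. If $\int_{\mathcal A}\Phi_\beta\ne0$, then $$\sum_{i=1}^nb_ih(v_i)+h(p)\ge0\quad\text{for every }h\in C^{ample}_{\mathcal T}.$$
   Context: $M\cong\mathbb Z^d$ lattice with dual $N$; $\Delta\subset M_{\mathbb R}$ a reflexive polytope; $v_1,\ldots,v_n\in\partial\Delta\cap M$ include all vertices of $\Delta$; $\mathcal T$ a regular triangulation of $\Delta$ with vertex set $\{\mathbf0\}\cup\{v_i\}$, all maximal simplices containing $\mathbf 0$; $\Sigma$ the complete simplicial fan of cones over simplices of $\mathcal T$ not containing $\mathbf0$. $C^{ample}_{\mathcal T}$ is the set of functions $h:M_{\mathbb R}\to\mathbb R$, linear on each cone of $\Sigma$ (integer-valued on $M$), such that for all points $y_i\in M_{\mathbb R}$ and positive reals $\alpha_i$, $h(\sum_i\alpha_iy_i)\le\sum_i\alpha_ih(y_i)$, with equality iff some cone of $\Sigma$ contains all $y_i$. For $k\ge0$, $A_k$ is $\mathbb C[D_1,\ldots,D_n]$ modulo $\sum_i(\lambda\cdot v_i)D_i$ ($\lambda\in N$) and monomials $\prod_iD_i^{r_i}$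 such that no cone of $\Sigma$ contains all $v_i$ with $r_i>k$; it is identified with $H^*(\mathbb P_{\Sigma_k},\mathbb C)$ via $D_i\mapsto(k+1)D_{i,0}$, where $\Sigma_k$ is the complete simplicial fan in $M\oplus\mathbb Z^{nk}$ with rays $v_{i,j}=v_i\oplus e_{i,j}$ ($0\le j\le k$, $e_{i,j}$ for $j\ge1$ a basis, $e_{i,0}=-\sum_{j\ge1}e_{i,j}$), cones generated by sets $\{v_{i,j}:(i,j)\in I\}$ such that the $v_i$ with $(i,0),\ldots,(i,k)\in I$ lie in a cone of $\Sigma$, and $D_{i,j}$ the class of ray $v_{i,j}$. $\int_{A_k}=(k+1)^{-nk}\int_{\mathbb P_{\Sigma_k}}$; $\mathcal A=\varinjlim A_k$ under multiplication by $\prod_iD_i^l$, with induced $\int_{\mathcal A}$. $D_0=-\sum_iD_i$, $\bar M=M\oplus\mathbb Z$, $\mathbf v_i=v_i\oplus1$, $\mathbf v_0=\mathbf0\oplus1$, $K$ the cone spanned by the $\mathbf v_i$. $\Phi_\beta\in\mathcal A$ is the image of $D_0^{-b_0}\prod_{i=1}^nD_i^{k-b_i}\in A_k$ for $k\ge\max_ib_i$. *)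

From HB Require Import structures.
From mathcomp Require Import all_boot all_order all_algebra all_field.
From mathcomp Require Import reals.
From mathcomp Require Import mpoly.
Set Implicit Arguments. Unset Strict Implicit. Unset Printing Implicit Defensive.
Import Order.TTheory GRing.Theory Num.Theory.
Local Open Scope ring_scope.

(* Lattice M = Z^d (row vectors 'rV[int]_d), M_R = R^d ('rV[R]_d).          *)
(* The dual lattice N is identified with Z^d via the standard dot product.  *)

Section Geometry.
Variables (R : realType) (d : nat).

Definition vR (x : 'rV[int]_d) : 'rV[R]_d := map_mx (fun z : int => z%:~R) x.

Definition dotR (x y : 'rV[R]_d) : R := \sum_(c < d) x 0 c * y 0 c.

Definition in_conv (s : seq 'rV[R]_d) (x : 'rV[R]_d) : Prop :=
  exists lam : 'I_(size s) -> R,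
    (forall i, 0 <= lam i) /\ \sum_i lam i = 1 /\
    x = \sum_i lam i *: nth 0 s i.

(* Reflexive polytope: a lattice polytope conv(V) (V in M) which is also of
   the form {x | <u, x> >= -1 for all u in U} with U in N.  (This is
   Batyrev's definition: 0 is interior and the polar polytope conv(U) is a
   lattice polytope.) *)
Definition reflexive_polytope (Delta : 'rV[R]_d -> Prop) : Prop :=
  exists (V U : seq 'rV[int]_d),
    (forall x, Delta x <-> in_conv (map vR V) x) /\
    (forall x, Delta x <-> (forall u, u \in U -> -1 <= dotR (vR u) x)).

Definition interior_pt (Delta : 'rV[R]_d -> Prop) (x : 'rV[R]_d) : Prop :=
  exists eps : R, 0 < eps /\
    forall y : 'rV[R]_d, (forall c, `|y 0 c - x 0 c| < eps) -> Delta y.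

Definition boundary_pt (Delta : 'rV[R]_d -> Prop) (x : 'rV[R]_d) : Prop :=
  Delta x /\ ~ interior_pt Delta x.

Definition vertex_pt (Delta : 'rV[R]_d -> Prop) (x : 'rV[R]_d) : Prop :=
  Delta x /\ forall y z (t : R), Delta y -> Delta z -> 0 < t -> t < 1 ->
    x = t *: y + (1 - t) *: z -> y = x /\ z = x.

(* Point configuration {0} u {v_1..v_n}: indexed by option 'I_n,            *)
(* None <-> the origin 0, Some i <-> v_i.                                   *)
Variable n : nat.
Variable v : 'I_n -> 'rV[int]_d.

Definition wpt (j : option 'I_n) : 'rV[R]_d :=
  if j is Some i then vR (v i) else 0.

Definition simplex_conv (F : {set option 'I_n}) (x : 'rV[R]_d) : Prop :=
  exists lam : option 'I_n -> R,
    (forall j, 0 <= lam j) /\ (forall j, j \notin F -> lam j = 0) /\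
    \sum_j lam j = 1 /\ x = \sum_j lam j *: wpt j.

(* T (a set of simplices, each given by its vertex set) is a triangulation
   of Delta with vertex set exactly {0} u {v_1,...,v_n}. *)
Definition triangulation (Delta : 'rV[R]_d -> Prop)
    (T : {set {set option 'I_n}}) : Prop :=
  [/\
      (forall F G : {set option 'I_n}, F \in T -> G \subset F -> G \in T),
      (forall F : {set option 'I_n}, F \in T -> forall lam : option 'I_n -> R,
          \sum_(j in F) lam j = 0 -> \sum_(j in F) lam j *: wpt j = 0 ->
          forall j, j \in F -> lam j = 0),
      (forall x, Delta x <-> exists2 F, F \in T & simplex_conv F x),
      (forall (F G : {set option 'I_n}) x, F \in T -> G \in T -> simplex_conv F x ->
          simplex_conv G x -> simplex_conv (F :&: G) x) &
      (forall j, [set j] \in T)].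

(* Regularity: T is the set of (projections of) lower faces of the lifting
   of the points by some height function omega. *)
Definition regular (T : {set {set option 'I_n}}) : Prop :=
  exists omega : option 'I_n -> R, forall F : {set option 'I_n},
    F \in T <-> exists (a : 'rV[R]_d) (c : R),
      (forall j, j \in F -> dotR a (wpt j) + c = omega j) /\
      (forall j, j \notin F -> dotR a (wpt j) + c < omega j).

Definition max_simplices_contain_0 (T : {set {set option 'I_n}}) : Prop :=
  forall F : {set option 'I_n}, F \in T -> (forall G : {set option 'I_n}, G \in T -> F \subset G -> G = F) ->
    None \in F.

(* The fan Sigma: cones over the simplices of T not containing 0.           *)
(* A cone is given by the set J of indices of its rays v_j.                  *)
Definition sigma_cone (T : {set {set option 'I_n}}) (J : {set 'I_n}) : Prop :=
  [set Some j | j in J] \in T.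

Definition in_cone (J : {set 'I_n}) (x : 'rV[R]_d) : Prop :=
  exists mu : 'I_n -> R, (forall j, 0 <= mu j) /\
    x = \sum_(j in J) mu j *: vR (v j).

Definition in_common_cone (T : {set {set option 'I_n}}) (P : 'rV[R]_d -> Prop)
  : Prop := exists J, sigma_cone T J /\ forall y, P y -> in_cone J y.

Definition ample (T : {set {set option 'I_n}}) (h : 'rV[R]_d -> R) : Prop :=
  [/\
      (forall J, sigma_cone T J -> exists l : 'rV[R]_d,
          forall x, in_cone J x -> h x = dotR l x),
      (forall m : 'rV[int]_d, exists z : int, h (vR m) = z%:~R) &
      (forall (s : nat) (y : 'I_s -> 'rV[R]_d) (alpha : 'I_s -> R),
          (forall i, 0 < alpha i) ->
          h (\sum_i alpha i *: y i) <= \sum_i alpha i * h (y i) /\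
          (h (\sum_i alpha i *: y i) = \sum_i alpha i * h (y i) <->
             in_common_cone T (fun x => exists i, x = y i)))].

End Geometry.

(* Integration on the cohomology of a complete simplicial toric variety.    *)
(* H^*(P_Sigma', C) = C[D_rho] / (Stanley-Reisner ideal + linear relations) *)
(* and the integral is the linear functional on C[D_rho] which vanishes on  *)
(* that ideal and outside top degree, and satisfies                         *)
(*   int prod_{rho in sigma} D_rho = 1 / mult(sigma)                        *)
(* for every maximal cone sigma, mult(sigma) = |det(u_rho : rho in sigma)|. *)
(* Rays are indexed by a finite type I; variable D_rho is 'X_(enum_rank rho) *)
Section ToricIntegral.
Variables (I : finType) (D : nat).

Definition Xv (rho : I) : {mpoly algC[#|{: I}|]} := 'X_(enum_rank rho).

Definition dotZ (l u : 'rV[int]_D) : int := \sum_(c < D) l 0 c * u 0 c.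

Definition is_toric_integral (u : I -> 'rV[int]_D) (cone : {set I} -> Prop)
    (f : {mpoly algC[#|{: I}|]} -> algC) : Prop :=
  [/\
      (forall (a : algC) p q, f (a *: p + q) = a * f p + f q),
      (forall m : 'X_{1..#|{: I}|}, mdeg m <> D -> f 'X_[m] = 0),
      (forall S : {set I}, ~ cone S -> forall p, f (p * \prod_(rho in S) Xv rho) = 0),
      (forall (l : 'rV[int]_D) p,
          f (p * \sum_rho (dotZ l (u rho))%:~R *: Xv rho) = 0) &
      (forall (sigma : {set I}) (e : 'I_D -> I), cone sigma -> injective e ->
          sigma = [set e a | a : 'I_D] ->
          f (\prod_(rho in sigma) Xv rho) =
            ((absz (\det (\matrix_(a < D, c < D) u (e a) 0 c)))%:R)^-1)].

End ToricIntegral.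

(* The fan Sigma_k in M (+) Z^{nk}.  Rays v_{i,j}, (i,j) in 'I_n * 'I_k.+1.  *)
(* e_{i,j} (j >= 1) is the basis vector of Z^{nk} with index (i, j-1);       *)
(* e_{i,0} = - sum_{j>=1} e_{i,j}.                                           *)
Section SigmaK.
Variables (R : realType) (d n : nat) (v : 'I_n -> 'rV[int]_d).
Variable (T : {set {set option 'I_n}}).
Variable k : nat.

Definition eK (i : 'I_n) (j : 'I_k.+1) : 'rV[int]_(n * k) :=
  match unlift ord0 j with
  | Some j' => delta_mx 0 (mxvec_index i j')
  | None => - \sum_(j' < k) delta_mx 0 (mxvec_index i j')
  end.

Definition rayK (ij : 'I_n * 'I_k.+1) : 'rV[int]_(d + n * k) :=
  row_mx (v ij.1) (eK ij.1 ij.2).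

Definition coneK (I : {set 'I_n * 'I_k.+1}) : Prop :=
  in_common_cone (R := R) v T
    (fun x => exists i, x = vR R (v i) /\ forall j : 'I_k.+1, (i, j) \in I).

(* the identification A_k = H^*(P_{Sigma_k}) : D_i |-> (k+1) D_{i,0} *)
Definition idK (p : {mpoly algC[n]}) : {mpoly algC[#|{: 'I_n * 'I_k.+1}|]} :=
  comp_mpoly [tuple (k.+1)%:R *: Xv (i, ord0) | i < n] p.

Definition int_Ak (f : {mpoly algC[#|{: 'I_n * 'I_k.+1}|]} -> algC)
    (p : {mpoly algC[n]}) : algC :=
  ((k.+1)%:R ^+ (n * k))^-1 * f (idK p).

End SigmaK.

Definition D0 (n : nat) : {mpoly algC[n]} := - \sum_(i < n) 'X_i.

(* representative in A_k of Phi_beta, beta = (b0, b_1..b_n), for b0 <= 0 and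
   k >= max b_i :  D_0^{-b_0} prod_i D_i^{k - b_i} *)
Definition PhiK (n k : nat) (b0 : int) (b : 'I_n -> int) : {mpoly algC[n]} :=
  D0 n ^+ absz (- b0) * \prod_(i < n) 'X_i ^+ absz (k%:Z - b i).

From HB Require Import structures.
From mathcomp Require Import all_boot all_order all_algebra all_field.
From mathcomp Require Import reals.
From mathcomp Require Import mpoly.
From mathcomp Require Import zify lra.
From Stdlib Require Import Classical.
Set Implicit Arguments. Unset Strict Implicit. Unset Printing Implicit Defensive.
Import Order.TTheory GRing.Theory Num.Theory.
Local Open Scope ring_scope.

(* For b_i < 0 the factor D_i^(k - b_i) of Phi_beta is divisible by
   D_i^(k+1) = (k+1)^(k+1) D_(i,0)^(k+1).  The linear relations of P_Sigma_k
   make D_(i,0) and D_(i,j) interchangeable under the integral, so D_(i,0)^(k+1)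
   may be replaced by the product of all D_(i,j); by the Stanley-Reisner
   relations the integral then vanishes unless the v_i with b_i < 0 span a
   cone J of Sigma.  On J the ample function h is linear, and writing
   p + sum_(b_i >= 0) b_i v_i = sum_(b_i < 0) (-b_i) v_i, the sublinearity of h
   gives the inequality. *)

Section ToricIntegralSigmaK.
Variables (d n k : nat) (v : 'I_n -> 'rV[int]_d).
Variable cone : {set 'I_n * 'I_k.+1} -> Prop.
Variable f : {mpoly algC[#|{: 'I_n * 'I_k.+1}|]} -> algC.
Hypothesis f_integral : is_toric_integral (@rayK d n v k) cone f.

Lemma toric_integralB p q : f (p - q) = f p - f q.
Proof.
case: f_integral => linf _ _ _ _.
by rewrite addrC -scaleN1r linf mulN1r addrC.
Qed.

Lemma eq_mxvec_index (i i' : 'I_n) (j j' : 'I_k) :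
  (mxvec_index i' j' == mxvec_index i j) = ((i', j') == (i, j)).
Proof.
apply/eqP/eqP => [|[-> ->] //].
by rewrite /mxvec_index => /cast_ord_inj /enum_rank_inj.
Qed.

(* This element of the dual lattice yields the linear relation D_(i,j+1) = D_(i,0). *)
Lemma dotZ_rayK_delta (i : 'I_n) (j : 'I_k) (rho : 'I_n * 'I_k.+1) :
  dotZ (row_mx (0 : 'rV_d) (delta_mx 0 (mxvec_index i j))) (@rayK d n v k rho) =
  (rho == (i, lift ord0 j))%:R - (rho == (i, ord0))%:R.
Proof.
rewrite /dotZ big_split_ord /= big1 ?add0r; last first.
  by move=> c _; rewrite row_mxEl mxE mul0r.
under eq_bigr => c _ do rewrite /rayK !row_mxEr.
rewrite (bigD1 (mxvec_index i j)) //= big1 ?addr0; last first.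
  by move=> c /negbTE hc; rewrite mxE hc andbF mul0r.
rewrite mxE !eqxx mul1r.
case: rho => i' j' /=; rewrite /eK.
case: unliftP => [j'' ->|->].
  rewrite mxE eqxx /= eq_mxvec_index !xpair_eqE.
  rewrite (inj_eq (@lift_inj _ ord0)) [lift _ _ == ord0]eq_sym (negbTE (neq_lift _ _)).
  by rewrite andbF subr0 [i == i']eq_sym [j == j'']eq_sym.
rewrite !xpair_eqE (negbTE (neq_lift _ _)) andbF eqxx andbT sub0r mxE summxE.
under eq_bigr => c _ do rewrite mxE eqxx /= eq_mxvec_index xpair_eqE.
have [_|_] := eqVneq i' i; last by rewrite big1 ?oppr0.
rewrite (bigD1 j) //= eqxx big1 ?addr0 // => c /negbTE.
by rewrite eq_sym => ->.
Qed.

Lemma toric_integral_ray_ord0 (i : 'I_n) (j : 'I_k.+1) Q :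
  f (Q * Xv (i, j)) = f (Q * Xv (i, ord0)).
Proof.
case: (unliftP ord0 j) => [j' ->|->] //.
case: f_integral => _ _ _ linrel _.
have := linrel (row_mx (0 : 'rV_d) (delta_mx 0 (mxvec_index i j'))) Q.
under eq_bigr => rho _ do rewrite dotZ_rayK_delta intrB scalerBl.
have sum_delta (x : 'I_n * 'I_k.+1) :
    \sum_rho ((rho == x)%:R : int)%:~R *: Xv rho = Xv x.
  rewrite (bigD1 x) //= eqxx scale1r big1 ?addr0 // => rho /negbTE ->.
  by rewrite scale0r.
by rewrite sumrB !sum_delta mulrBr toric_integralB => /eqP; rewrite subr_eq0 => /eqP.
Qed.

Lemma toric_integral_prod_rays (i : 'I_n) (s : seq 'I_k.+1) Q :
  f (Q * \prod_(j <- s) Xv (i, j)) = f (Q * Xv (i, ord0) ^+ size s).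
Proof.
elim: s Q => [|j s IHs] Q; first by rewrite big_nil expr0.
by rewrite big_cons exprS !mulrA IHs mulrAC toric_integral_ray_ord0 mulrAC.
Qed.

Lemma toric_integral_prod_fibers (s : seq 'I_n) Q :
  f (Q * \prod_(i <- s) \prod_(j : 'I_k.+1) Xv (i, j)) =
  f (Q * \prod_(i <- s) Xv (i, ord0) ^+ k.+1).
Proof.
elim: s Q => [|i s IHs] Q; first by rewrite !big_nil.
have fiber : \prod_(j : 'I_k.+1) Xv (i, j) = \prod_(j <- enum 'I_k.+1) Xv (i, j).
  by rewrite big_enum.
rewrite !big_cons !mulrA IHs mulrAC fiber toric_integral_prod_rays.
by rewrite size_enum_ord mulrAC.
Qed.

Lemma toric_integral_powers_noncone (S : {set 'I_n}) Q :
  ~ cone [set rho | rho.1 \in S] ->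
  f (Q * \prod_(i in S) Xv (i, ord0) ^+ k.+1) = 0.
Proof.
case: f_integral => _ _ stanley_reisner _ _ ncone.
rewrite -big_enum -toric_integral_prod_fibers big_enum /= pair_big_dep /=.
rewrite -(stanley_reisner _ ncone Q); congr (f (Q * _)).
by apply: eq_big => [[i j]|[i j] _] //=; rewrite inE andbT.
Qed.

End ToricIntegralSigmaK.

Lemma idK_PhiK_negative_factor (n k : nat) (b0 : int) (b : 'I_n -> int) :
  exists Q, idK k (@PhiK n k b0 b) =
    Q * \prod_(i in [set i | b i < 0]) Xv (i, ord0) ^+ k.+1.
Proof.
rewrite /idK /PhiK rmorphM rmorphXn rmorph_prod /=.
under eq_bigr => i _ do
  rewrite rmorphXn /= comp_mpolyXU -tnth_nth tnth_mktuple exprZn.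
rewrite (bigID (mem [set i | b i < 0])) /=.
have split_neg : \prod_(i in [set i | b i < 0])
      (k.+1%:R ^+ absz (k%:Z - b i) *: Xv (i, ord0 : 'I_k.+1) ^+ absz (k%:Z - b i)) =
    \prod_(i in [set i | b i < 0])
      (k.+1%:R ^+ absz (k%:Z - b i) *: Xv (i, ord0) ^+ (absz (k%:Z - b i) - k.+1)%N)
    * \prod_(i in [set i | b i < 0]) Xv (i, ord0) ^+ k.+1.
  rewrite -big_split; apply: eq_bigr => i; rewrite inE /= => bi_lt0.
  by rewrite -scalerAl -exprD subnK //; lia.
by rewrite split_neg; eexists; rewrite mulrCA mulrAC.
Qed.

Lemma PhiK_integral_neq0_cone (R : realType) (d n k : nat)
    (v : 'I_n -> 'rV[int]_d) (T : {set {set option 'I_n}}) f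
    (b0 : int) (b : 'I_n -> int) :
  is_toric_integral (@rayK d n v k) (coneK R v T (k:=k)) f ->
  int_Ak f (@PhiK n k b0 b) != 0 ->
  exists2 J, sigma_cone T J & forall i, b i < 0 -> in_cone v J (vR R (v i)).
Proof.
move=> f_integral int_neq0; apply: NNPP => no_cone.
move/negP: int_neq0; apply.
have [Q PhiK_eq] := idK_PhiK_negative_factor k b0 b.
rewrite /int_Ak PhiK_eq (toric_integral_powers_noncone f_integral) ?mulr0 //.
move=> [J [sJ inJ]]; apply: no_cone; exists J => // i bi_lt0.
by apply: inJ; exists i; split => // j; rewrite !inE.
Qed.

Section AmpleFunctions.
Variables (R : realType) (d n : nat) (v : 'I_n -> 'rV[int]_d).
Variable T : {set {set option 'I_n}}.

Lemma in_cone0 J : in_cone v J (0 : 'rV[R]_d).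
Proof.
by exists (fun=> 0); split => //; rewrite big1 // => j _; rewrite scale0r.
Qed.

Lemma in_coneD J (x y : 'rV[R]_d) :
  in_cone v J x -> in_cone v J y -> in_cone v J (x + y).
Proof.
move=> [mu [mu_ge0 ->]] [nu [nu_ge0 ->]]; exists (fun j => mu j + nu j).
split; first by move=> j; rewrite addr_ge0.
by rewrite -big_split; apply: eq_bigr => j _; rewrite scalerDl.
Qed.

Lemma in_coneZ J (c : R) (x : 'rV[R]_d) :
  0 <= c -> in_cone v J x -> in_cone v J (c *: x).
Proof.
move=> c_ge0 [mu [mu_ge0 ->]]; exists (fun j => c * mu j).
split; first by move=> j; rewrite mulr_ge0.
by rewrite scaler_sumr; apply: eq_bigr => j _; rewrite scalerA.
Qed.

Lemma in_cone_sum J (I : finType) (c : I -> R) (x : I -> 'rV[R]_d) :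
  (forall i, 0 <= c i) -> (forall i, c i != 0 -> in_cone v J (x i)) ->
  in_cone v J (\sum_i c i *: x i).
Proof.
move=> c_ge0 x_in; apply: (big_ind (in_cone v J)).
- exact: in_cone0.
- exact: in_coneD.
move=> i _; have [->|ci_neq0] := eqVneq (c i) 0.
  by rewrite scale0r; apply: in_cone0.
by apply: in_coneZ => //; apply: x_in.
Qed.

Lemma dotR_sumr (l : 'rV[R]_d) (I : finType) (c : I -> R) (x : I -> 'rV[R]_d) :
  dotR l (\sum_i c i *: x i) = \sum_i c i * dotR l (x i).
Proof.
rewrite /dotR; under eq_bigr => a _ do rewrite summxE big_distrr /=.
rewrite exchange_big /=; apply: eq_bigr => i _.
by rewrite big_distrr /=; apply: eq_bigr => a _; rewrite mxE mulrCA.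
Qed.

Lemma ample_sublinear (h : 'rV[R]_d -> R) : ample v T h ->
  forall (x0 : 'rV[R]_d) (I : finType) (c : I -> R) (x : I -> 'rV[R]_d),
  (forall i, 0 <= c i) ->
  h (x0 + \sum_i c i *: x i) <= h x0 + \sum_i c i * h (x i).
Proof.
case=> _ _ convex x0 I c x c_ge0.
have h0_le0 : h 0 <= 0.
  by have [] := convex 0%N (fun _ => 0) (fun _ => 1) (fun _ => ltr01); rewrite !big_ord0.
have hD y z : h (y + z) <= h y + h z.
  have [] := convex 2%N (fun i : 'I_2 => if val i == 0%N then y else z)
    (fun _ => 1) (fun _ => ltr01).
  by rewrite !big_ord_recl !big_ord0 /= !scale1r !mul1r !addr0.
have hZ (t : R) y : 0 <= t -> h (t *: y) <= t * h y.
  rewrite le0r => /orP[/eqP ->|t_gt0]; first by rewrite scale0r mul0r.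
  by have [] := convex 1%N (fun _ => y) (fun _ => t) (fun _ => t_gt0); rewrite !big_ord1.
apply: le_trans (hD _ _) _; rewrite lerD2l.
apply: (big_ind2 (fun y t => h y <= t)) => // [y1 y2 t1 t2 le1 le2|i _].
  by apply: le_trans (hD _ _) _; apply: lerD.
exact: hZ.
Qed.

Lemma ample_relation_ge0 (h : 'rV[R]_d -> R) (J : {set 'I_n})
    (b : 'I_n -> R) (x : 'rV[R]_d) :
  ample v T h -> sigma_cone T J ->
  (forall i, b i < 0 -> in_cone v J (vR R (v i))) ->
  x = - \sum_i b i *: vR R (v i) ->
  0 <= \sum_i b i * h (vR R (v i)) + h x.
Proof.
move=> h_ample sJ neg_in_J x_def.
have [h_lin _ _] := h_ample; have [l h_eq_l] := h_lin J sJ.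
pose bneg i := if b i < 0 then - b i else 0.
have bneg_ge0 i : 0 <= bneg i by rewrite /bneg; case: ltrP => // /ltW; rewrite oppr_ge0.
have bpos_ge0 i : 0 <= b i + bneg i by rewrite /bneg; case: ltrP; rewrite ?addrN ?addr0.
have bneg_in_J i : bneg i != 0 -> in_cone v J (vR R (v i)).
  by rewrite /bneg; case: ltrP => [/neg_in_J //|_]; rewrite eqxx.
have x_shift : x + \sum_i (b i + bneg i) *: vR R (v i) = \sum_i bneg i *: vR R (v i).
  rewrite x_def -sumrN -big_split; apply: eq_bigr => i _ /=.
  by rewrite scalerDl addKr.
have h_neg_part : h (\sum_i bneg i *: vR R (v i)) = \sum_i bneg i * h (vR R (v i)).
  rewrite h_eq_l ?dotR_sumr; last exact: in_cone_sum.
  apply: eq_bigr => i _; have [->|/bneg_in_J vi_in] := eqVneq (bneg i) 0.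
    by rewrite !mul0r.
  by rewrite h_eq_l.
have := ample_sublinear h_ample x (fun i => vR R (v i)) bpos_ge0.
rewrite /= x_shift h_neg_part.
under [X in _ <= _ + X]eq_bigr => i _ do rewrite mulrDl.
rewrite big_split /=; lra.
Qed.

Lemma vR_relation (p : 'rV[int]_d) (b : 'I_n -> int) :
  \sum_i b i *: v i = - p -> vR R p = - \sum_i (b i)%:~R *: vR R (v i).
Proof.
move=> b_rel; rewrite -[p]opprK -b_rel; apply/rowP => a.
rewrite !mxE !summxE intrN rmorph_sum.
by congr (- _); apply: eq_bigr => i _; rewrite !mxE /= intrM.
Qed.

End AmpleFunctions.

Theorem lemma5p4 (R : realType) (d n : nat) (Delta : 'rV[R]_d -> Prop)
    (v : 'I_n -> 'rV[int]_d) (T : {set {set option 'I_n}}) :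
  reflexive_polytope Delta ->
  (forall i, boundary_pt Delta (vR R (v i))) ->
  (forall x, vertex_pt Delta x -> exists i, x = vR R (v i)) ->
  triangulation v Delta T -> regular R v T -> max_simplices_contain_0 T ->
  forall (p : 'rV[int]_d) (q : int),
  (* p (+) q lies in K = cone(v_0, ..., v_n), v_0 = 0 (+) 1, v_i = v_i (+) 1 *)
  (exists (mu0 : R) (mu : 'I_n -> R), 0 <= mu0 /\ (forall i, 0 <= mu i) /\
     vR R p = \sum_i mu i *: vR R (v i) /\ q%:~R = mu0 + \sum_i mu i) ->
  forall (b0 : int) (b : 'I_n -> int),
  (* sum_{i=0}^n b_i v_i = - (p (+) q) *)
  \sum_i b i *: v i = - p -> b0 + \sum_i b i = - q ->
  b0 <= 0 ->
  (* int_A Phi_beta, computed in A_k for any k >= max_i b_i *)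
  forall k : nat, (forall i, b i <= k%:Z) ->
  forall f, is_toric_integral (@rayK d n v k) (coneK R v T (k:=k)) f ->
  int_Ak f (@PhiK n k b0 b) != 0 ->
  forall h : 'rV[R]_d -> R, ample v T h ->
  0 <= \sum_i (b i)%:~R * h (vR R (v i)) + h (vR R p).
Proof.
move=> _ _ _ _ _ _ p q _ b0 b p_rel _ _ k _ f f_integral int_neq0 h h_ample.
have [J sJ neg_in_J] := PhiK_integral_neq0_cone f_integral int_neq0.
apply: (ample_relation_ge0 h_ample sJ _ (vR_relation R p_rel)) => i.
by rewrite ltrz0; apply: neg_in_J.
Qed.
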